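(* Let $T$ be an $L_1$-periodic tiling of type $(\gamma_1,\gamma_2,\gamma_3)$ with $\gamma_1,\gamma_2,\gamma_3>0$. Then there is no infinite path in $T$. Equivalently, the cut quiver on $L_0/L_1$ (the quiver with vertices $L_0/L_1$ and the arrows in $T$) is acyclic.
   Context: Let $u^\top=(1,0)$, $v^\top=-(\tfrac12,\tfrac{\sqrt3}{2})$, $w=-(u+v)$, $L_0=\langle u,v\rangle$, and $L_1\le L_0$ a full-rank sublattice with $n=|L_0/L_1|$. An $L_1$-periodic tiling is an $L_1$-invariant map $T\colon L_0\to\{U,V,W\}$ such that for every $x$ exactly one of $T(x)=W$, $T(x+u)=V$, $T(x-v)=U$ holds; $T(x)$ removes one arrow of the upward triangle $x\to x+u\to x-v\to x$ ($U$: $x\to x+u$; $V$: $x-v\to x$; $W$: $x+u\to x-v$), and an arrow $x\to x+\alpha$ ($\alpha\in\{u,v,w\}$) is in $T$ if not removed; a path is in $T$ if all its arrows are. The type of $T$ is $(\#\tilde T^{-1}(U),\#\tilde T^{-1}(V),\#\tilde T^{-1}(W))$ for the induced map $\tilde T$ on $L_0/L_1$. *)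

(* the lattice L0 = Z u + Z v is identified with Z^2 via
   coordinates (a,b) <-> a*u + b*v. *)
From Stdlib Require Import ZArith List.
Open Scope Z_scope.

Definition pt := (Z * Z)%type.
Definition padd (x y : pt) : pt := (fst x + fst y, snd x + snd y).
Definition psub (x y : pt) : pt := (fst x - fst y, snd x - snd y).
Definition pscale (k : Z) (x : pt) : pt := (k * fst x, k * snd x).

Definition u : pt := (1, 0).
Definition v : pt := (0, 1).
Definition w : pt := (-1, -1).

Definition inL1 (b1 b2 : pt) (x : pt) : Prop :=
  exists p q : Z, x = padd (pscale p b1) (pscale q b2).
Definition full_rank (b1 b2 : pt) : Prop :=
  fst b1 * snd b2 - snd b1 * fst b2 <> 0.

Inductive tile := TU | TV | TW.

Definition exactly_one3 (P Q R : Prop) : Prop :=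
  (P /\ ~ Q /\ ~ R) \/ (~ P /\ Q /\ ~ R) \/ (~ P /\ ~ Q /\ R).

Definition L1_invariant (b1 b2 : pt) (T : pt -> tile) : Prop :=
  forall x l, inL1 b1 b2 l -> T (padd x l) = T x.

Definition tiling_cond (T : pt -> tile) : Prop :=
  forall x, exactly_one3 (T x = TW) (T (padd x u) = TV) (T (psub x v) = TU).

Definition periodic_tiling (b1 b2 : pt) (T : pt -> tile) : Prop :=
  L1_invariant b1 b2 T /\ tiling_cond T.

(* Number of L1-cosets (elements of L0/L1) on which the L1-invariant
   predicate P holds equals n: there are n pairwise non-congruent
   representatives satisfying P, and every point satisfying P is congruent
   to one of them. *)
Definition coset_count (b1 b2 : pt) (P : pt -> Prop) (n : nat) : Prop :=
  exists reps : list pt,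
    length reps = n /\
    (forall r, In r reps -> P r) /\
    (forall i j, (i < n)%nat -> (j < n)%nat -> i <> j ->
       ~ inL1 b1 b2 (psub (nth i reps (0,0)) (nth j reps (0,0)))) /\
    (forall x, P x -> exists r, In r reps /\ inL1 b1 b2 (psub x r)).

Definition has_type (b1 b2 : pt) (T : pt -> tile) (g1 g2 g3 : nat) : Prop :=
  coset_count b1 b2 (fun x => T x = TU) g1 /\
  coset_count b1 b2 (fun x => T x = TV) g2 /\
  coset_count b1 b2 (fun x => T x = TW) g3.

Inductive dir := Du | Dv | Dw.
Definition dvec (d : dir) : pt := match d with Du => u | Dv => v | Dw => w end.

(* The arrow x -> x + dvec d belongs to exactly one upward triangle
   y -> y+u -> y-v -> y, and is removed iff T y removes it:
   - x -> x+u is the U-arrow of the triangle at y = x;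
   - x -> x+v is the V-arrow (y-v -> y) of the triangle at y = x+v;
   - x -> x+w is the W-arrow (y+u -> y-v) of the triangle at y = x-u. *)
Definition arrow_in (T : pt -> tile) (x : pt) (d : dir) : Prop :=
  match d with
  | Du => T x <> TU
  | Dv => T (padd x v) <> TV
  | Dw => T (psub x u) <> TW
  end.

Definition infinite_path (T : pt -> tile) : Prop :=
  exists (f : nat -> pt) (ds : nat -> dir),
    forall k, f (S k) = padd (f k) (dvec (ds k)) /\ arrow_in T (f k) (ds k).

From Stdlib Require Import ZArith List Lia.
Open Scope Z_scope.

(** The tiling defines a height function h on L0 with h(x+u) = h(x) - [T x = U],
    h(x+v) = h(x) - [T (x+v) = V] and h(x+w) = h(x) + 1 - [T (x-u) = W]; it is
    well defined because every upward triangle loses exactly one arrow.  If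
    N L0 is contained in L1, translating by N u (resp. N v) shifts h by a
    constant -r1 (resp. -r2), so phi(a u + b v) = r1 a + r2 b + N h(a u + b v)
    is N L0-periodic, hence bounded above.  Along an arrow of T in direction
    u, v or w, phi increases by r1, r2 or N - r1 - r2, the numbers of U-, V- and
    W-tiles in a period of a line in that direction; these are positive when all
    three tile types occur.  So phi strictly increases along paths in T, and no
    path can be infinite. *)

Lemma Z_succ_invariant {A : Type} (F : Z -> A) :
  (forall z, F (z + 1) = F z) -> forall z, F z = F 0.
Proof.
  intros HF z; induction z as [| z IH | z IH] using Z.peano_ind.
  - reflexivity.
  - rewrite <- Z.add_1_r, HF; exact IH.
  - rewrite <- IH, <- (HF (Z.pred z)), Z.add_1_r, Z.succ_pred; reflexivity.
Qed.

Lemma Z2_succ_invariant {A : Type} (F : Z -> Z -> A) :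
  (forall a b, F (a + 1) b = F a b) -> (forall a b, F a (b + 1) = F a b) ->
  forall a b, F a b = F 0 0.
Proof.
  intros Ha Hb a b; transitivity (F 0 b).
  - apply (Z_succ_invariant (fun a => F a b)); intros c; apply Ha.
  - apply (Z_succ_invariant (F 0)); intros c; apply Hb.
Qed.

Lemma periodic_mul {A : Type} (F : Z -> A) (N : Z) :
  (forall z, F (z + N) = F z) -> forall z p, F (z + N * p) = F z.
Proof.
  intros HF z p.
  transitivity (F (z + N * 0)); [|rewrite Z.mul_0_r, Z.add_0_r; reflexivity].
  apply (Z_succ_invariant (fun p => F (z + N * p))); intros q.
  rewrite Z.mul_add_distr_l, Z.mul_1_r, Z.add_assoc; apply HF.
Qed.

Lemma Z_step_monotone (g : Z -> Z) :
  (forall z, g z <= g (z + 1)) -> forall a b, a <= b -> g a <= g b.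
Proof.
  intros Hg a b Hab.
  replace b with (a + (b - a)) by ring.
  assert (Hfrom_a : forall n, 0 <= n -> g a <= g (a + n)).
  { apply natlike_ind.
    - rewrite Z.add_0_r; lia.
    - intros n _ IH; rewrite <- Z.add_1_r, Z.add_assoc.
      specialize (Hg (a + n)); lia. }
  apply Hfrom_a; lia.
Qed.

Fixpoint max_upto (g : Z -> Z) (n : nat) : Z :=
  match n with
  | O => g 0
  | S m => Z.max (max_upto g m) (g (Z.of_nat m))
  end.

Lemma max_upto_ge (g : Z -> Z) (n : nat) (z : Z) :
  0 <= z < Z.of_nat n -> g z <= max_upto g n.
Proof.
  induction n as [|n IH]; intros Hz; cbn [max_upto]; [lia|].
  rewrite Nat2Z.inj_succ in Hz.
  destruct (Z.eq_dec z (Z.of_nat n)) as [->|Hne]; [lia|].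
  specialize (IH ltac:(lia)); lia.
Qed.

Lemma periodic2_bounded (F : pt -> Z) (N : Z) :
  0 < N ->
  (forall a b, F (a + N, b) = F (a, b)) -> (forall a b, F (a, b + N) = F (a, b)) ->
  exists M, forall x, F x <= M.
Proof.
  intros HN Hfst Hsnd.
  set (n := Z.to_nat N).
  assert (Hn : Z.of_nat n = N) by (apply Z2Nat.id; lia).
  exists (max_upto (fun a => max_upto (fun b => F (a, b)) n) n).
  intros [a b].
  assert (Hred : F (a, b) = F (a mod N, b mod N)).
  { rewrite (Z.div_mod a N), (Z.div_mod b N) at 1 by lia.
    rewrite !(Z.add_comm (N * _)).
    rewrite (periodic_mul (fun a => F (a, _)) N (fun z => Hfst z _)).
    apply (periodic_mul (fun b => F (a mod N, b)) N (Hsnd (a mod N))). }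
  rewrite Hred.
  pose proof (Z.mod_pos_bound a N HN); pose proof (Z.mod_pos_bound b N HN).
  eapply Z.le_trans.
  - apply (max_upto_ge (fun b => F (a mod N, b)) n); lia.
  - apply (max_upto_ge (fun a => max_upto (fun b => F (a, b)) n) n); lia.
Qed.

Lemma no_infinite_path_of_potential (T : pt -> tile) (F : pt -> Z) :
  (exists M, forall x, F x <= M) ->
  (forall x d, arrow_in T x d -> F x < F (padd x (dvec d))) ->
  ~ infinite_path T.
Proof.
  intros [M HM] Hstep [f [ds Hpath]].
  assert (Hgrow : forall k, F (f O) + Z.of_nat k <= F (f k)).
  { induction k as [|k IH]; [lia|].
    destruct (Hpath k) as [-> Harrow].
    specialize (Hstep _ _ Harrow); lia. }
  specialize (Hgrow (Z.to_nat (M - F (f O) + 1))).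
  specialize (HM (f (Z.to_nat (M - F (f O) + 1)))); lia.
Qed.

Definition det (b1 b2 : pt) : Z := fst b1 * snd b2 - snd b1 * fst b2.

Lemma inL1_det_axes (b1 b2 : pt) (k : Z) :
  inL1 b1 b2 (k * det b1 b2, 0) /\ inL1 b1 b2 (0, k * det b1 b2).
Proof.
  destruct b1 as [b11 b12], b2 as [b21 b22]; unfold inL1, det, padd, pscale; cbn [fst snd].
  split.
  - exists (k * b22), (- k * b12); f_equal; ring.
  - exists (- k * b21), (k * b11); f_equal; ring.
Qed.

Lemma L1_invariant_det_periodic (b1 b2 : pt) (T : pt -> tile) (k : Z) :
  L1_invariant b1 b2 T ->
  (forall a b, T (a + k * det b1 b2, b) = T (a, b)) /\
  (forall a b, T (a, b + k * det b1 b2) = T (a, b)).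
Proof.
  intros Hinv; destruct (inL1_det_axes b1 b2 k) as [Hfst Hsnd].
  split; intros a b.
  - specialize (Hinv (a, b) _ Hfst); unfold padd in Hinv; cbn [fst snd] in Hinv.
    rewrite Z.add_0_r in Hinv; exact Hinv.
  - specialize (Hinv (a, b) _ Hsnd); unfold padd in Hinv; cbn [fst snd] in Hinv.
    rewrite Z.add_0_r in Hinv; exact Hinv.
Qed.

Lemma coset_count_witness (b1 b2 : pt) (P : pt -> Prop) (n : nat) :
  coset_count b1 b2 P n -> (0 < n)%nat -> exists x, P x.
Proof.
  intros [[|r reps] [Hlen [HP _]]] Hn; [cbn in Hlen; lia|].
  exists r; apply HP; left; reflexivity.
Qed.

Definition tile_ind (s t : tile) : Z :=
  match s, t with
  | TU, TU | TV, TV | TW, TW => 1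
  | _, _ => 0
  end.

Lemma tile_ind_refl (t : tile) : tile_ind t t = 1.
Proof. now destruct t. Qed.

Lemma tile_ind_neq (s t : tile) : s <> t -> tile_ind s t = 0.
Proof. destruct s, t; cbn; congruence. Qed.

Lemma tile_ind_nonneg (s t : tile) : 0 <= tile_ind s t.
Proof. destruct s, t; cbn; lia. Qed.

Lemma tile_ind_partition (s : tile) : tile_ind s TU + tile_ind s TV + tile_ind s TW = 1.
Proof. now destruct s. Qed.

Lemma exactly_one3_tile_ind (s1 s2 s3 t1 t2 t3 : tile) :
  exactly_one3 (s1 = t1) (s2 = t2) (s3 = t3) ->
  tile_ind s1 t1 + tile_ind s2 t2 + tile_ind s3 t3 = 1.
Proof.
  intros [[-> [H2 H3]] | [[H1 [-> H3]] | [H1 [H2 ->]]]];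
    rewrite ?tile_ind_refl, ?tile_ind_neq by assumption; reflexivity.
Qed.

Fixpoint psum (f : Z -> Z) (n : nat) : Z :=
  match n with
  | O => 0
  | S m => psum f m + f (Z.of_nat m)
  end.

(* Sum over [0, z) for z >= 0, and minus the sum over [z, 0) for z < 0. *)
Definition zsum (f : Z -> Z) (z : Z) : Z :=
  psum f (Z.to_nat z) - psum (fun j => f (- j - 1)) (Z.to_nat (- z)).

Lemma zsum_0 (f : Z -> Z) : zsum f 0 = 0.
Proof. reflexivity. Qed.

Lemma zsum_succ (f : Z -> Z) (z : Z) : zsum f (z + 1) = zsum f z + f z.
Proof.
  unfold zsum; destruct (Z.leb_spec 0 z) as [Hz|Hz].
  - replace (Z.to_nat (z + 1)) with (S (Z.to_nat z)) by lia.
    replace (Z.to_nat (- (z + 1))) with O by lia.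
    replace (Z.to_nat (- z)) with O by lia.
    cbn [psum]; rewrite Z2Nat.id by lia; ring.
  - replace (Z.to_nat (z + 1)) with O by lia.
    replace (Z.to_nat z) with O by lia.
    replace (Z.to_nat (- z)) with (S (Z.to_nat (- (z + 1)))) by lia.
    cbn [psum]; rewrite Z2Nat.id by lia.
    replace (- - (z + 1) - 1) with z by ring; ring.
Qed.

Section Height.

Variable T : pt -> tile.
Hypothesis tiling : tiling_cond T.

Let ind (t : tile) (x : pt) : Z := tile_ind (T x) t.

Lemma ind_nonneg (t : tile) (x : pt) : 0 <= ind t x.
Proof. apply tile_ind_nonneg. Qed.

Lemma ind_partition (x : pt) : ind TU x + ind TV x + ind TW x = 1.
Proof. apply tile_ind_partition. Qed.

Lemma ind_triangle (a b : Z) : ind TW (a, b) + ind TV (a + 1, b) + ind TU (a, b - 1) = 1.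
Proof.
  pose proof (exactly_one3_tile_ind _ _ _ _ _ _ (tiling (a, b))) as H.
  unfold padd, psub, u, v in H; cbn [fst snd] in H.
  rewrite Z.add_0_r, Z.sub_0_r in H; exact H.
Qed.

Lemma ind_rhombus (a b : Z) :
  ind TU (a, b) + ind TV (a + 1, b + 1) = ind TU (a, b + 1) + ind TV (a, b + 1).
Proof.
  pose proof (ind_triangle a (b + 1)) as H.
  replace (b + 1 - 1) with b in H by ring.
  pose proof (ind_partition (a, b + 1)); lia.
Qed.

Definition height (x : pt) : Z :=
  - zsum (fun j => ind TU (j, 0)) (fst x) - zsum (fun j => ind TV (fst x, j + 1)) (snd x).

Lemma height_succ_snd (a b : Z) : height (a, b + 1) = height (a, b) - ind TV (a, b + 1).
Proof. unfold height; cbn [fst snd]; rewrite zsum_succ; ring. Qed.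

Lemma height_succ_fst (a b : Z) : height (a + 1, b) = height (a, b) - ind TU (a, b).
Proof.
  set (jump := fun c => zsum (fun j => ind TV (a + 1, j + 1)) c
                      - zsum (fun j => ind TV (a, j + 1)) c - ind TU (a, c)).
  assert (Hjump : jump b = jump 0).
  { apply Z_succ_invariant; intros c; unfold jump.
    rewrite !zsum_succ; pose proof (ind_rhombus a c); lia. }
  unfold jump in Hjump; rewrite !zsum_0 in Hjump.
  unfold height; cbn [fst snd]; rewrite zsum_succ; lia.
Qed.

Lemma height_succ_diag (a b : Z) :
  height (a + 1, b + 1) = height (a, b) - 1 + ind TW (a, b + 1).
Proof.
  rewrite height_succ_fst, height_succ_snd.
  pose proof (ind_partition (a, b + 1)); lia.
Qed.

Variable N : Z.
Hypothesis N_pos : 0 < N.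
Hypothesis periodic_fst : forall a b, T (a + N, b) = T (a, b).
Hypothesis periodic_snd : forall a b, T (a, b + N) = T (a, b).

Definition weight_u : Z := height (0, 0) - height (N, 0).
Definition weight_v : Z := height (0, 0) - height (0, N).

Definition weight (d : dir) : Z :=
  match d with
  | Du => weight_u
  | Dv => weight_v
  | Dw => N - weight_u - weight_v
  end.

Lemma height_shift_fst (a b : Z) : height (a + N, b) = height (a, b) - weight_u.
Proof.
  enough (E : height (a + N, b) - height (a, b) = height (0 + N, 0) - height (0, 0))
    by (unfold weight_u; rewrite Z.add_0_l in E; lia).
  apply (Z2_succ_invariant (fun a b => height (a + N, b) - height (a, b))); intros c d.
  - replace (c + 1 + N) with (c + N + 1) by ring.
    rewrite !height_succ_fst; unfold ind; rewrite periodic_fst; ring.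
  - rewrite !height_succ_snd; unfold ind; rewrite periodic_fst; ring.
Qed.

Lemma height_shift_snd (a b : Z) : height (a, b + N) = height (a, b) - weight_v.
Proof.
  enough (E : height (a, b + N) - height (a, b) = height (0, 0 + N) - height (0, 0))
    by (unfold weight_v; rewrite Z.add_0_l in E; lia).
  apply (Z2_succ_invariant (fun a b => height (a, b + N) - height (a, b))); intros c d.
  - rewrite !height_succ_fst; unfold ind; rewrite periodic_snd; ring.
  - replace (d + 1 + N) with (d + N + 1) by ring.
    rewrite !height_succ_snd; unfold ind; replace (d + N + 1) with (d + 1 + N) by ring.
    rewrite periodic_snd; ring.
Qed.

Definition potential (x : pt) : Z := weight_u * fst x + weight_v * snd x + N * height x.

Lemma potential_periodic_fst (a b : Z) : potential (a + N, b) = potential (a, b).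
Proof. unfold potential; cbn [fst snd]; rewrite height_shift_fst; ring. Qed.

Lemma potential_periodic_snd (a b : Z) : potential (a, b + N) = potential (a, b).
Proof. unfold potential; cbn [fst snd]; rewrite height_shift_snd; ring. Qed.

Lemma potential_step (x : pt) (d : dir) :
  arrow_in T x d -> potential (padd x (dvec d)) = potential x + weight d.
Proof.
  destruct x as [a b], d; cbn [arrow_in dvec weight];
    unfold potential, padd, psub, u, v, w; cbn [fst snd]; intros Harrow.
  - rewrite Z.add_0_r, height_succ_fst.
    unfold ind; rewrite (tile_ind_neq _ _ Harrow); ring.
  - rewrite Z.add_0_r in *; rewrite height_succ_snd.
    unfold ind; rewrite (tile_ind_neq _ _ Harrow); ring.
  - rewrite Z.sub_0_r in Harrow.
    pose proof (height_succ_diag (a - 1) (b - 1)) as E.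
    replace (a - 1 + 1) with a in E by ring; replace (b - 1 + 1) with b in E by ring.
    replace (a + -1) with (a - 1) by ring; replace (b + -1) with (b - 1) by ring.
    unfold ind in E; rewrite (tile_ind_neq _ _ Harrow) in E; lia.
Qed.

Lemma weight_u_pos (a b : Z) : T (a, b) = TU -> 1 <= weight_u.
Proof.
  intros HU.
  assert (Hmono : - height (a + 1, b) <= - height (a + N, b)).
  { apply (Z_step_monotone (fun k => - height (a + k, b))); [|lia].
    intros k; rewrite Z.add_assoc, height_succ_fst.
    pose proof (ind_nonneg TU (a + k, b)); lia. }
  rewrite height_shift_fst, height_succ_fst in Hmono.
  unfold ind in Hmono; rewrite HU, tile_ind_refl in Hmono; lia.
Qed.

Lemma weight_v_pos (a b : Z) : T (a, b) = TV -> 1 <= weight_v.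
Proof.
  intros HV.
  assert (Hmono : - height (a, b - 1 + 1) <= - height (a, b - 1 + N)).
  { apply (Z_step_monotone (fun k => - height (a, b - 1 + k))); [|lia].
    intros k; rewrite Z.add_assoc, height_succ_snd.
    pose proof (ind_nonneg TV (a, b - 1 + k + 1)); lia. }
  rewrite height_shift_snd, height_succ_snd in Hmono.
  replace (b - 1 + 1) with b in Hmono by ring.
  unfold ind in Hmono; rewrite HV, tile_ind_refl in Hmono; lia.
Qed.

Lemma weight_w_pos (a b : Z) : T (a, b) = TW -> 1 <= N - weight_u - weight_v.
Proof.
  intros HW.
  assert (Hmono : height (a + 1, b - 1 + 1) + 1 <= height (a + N, b - 1 + N) + N).
  { apply (Z_step_monotone (fun k => height (a + k, b - 1 + k) + k)); [|lia].
    intros k; rewrite !Z.add_assoc, height_succ_diag.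
    pose proof (ind_nonneg TW (a + k, b - 1 + k + 1)); lia. }
  rewrite height_shift_fst, height_shift_snd, height_succ_diag in Hmono.
  replace (b - 1 + 1) with b in Hmono by ring.
  unfold ind in Hmono; rewrite HW, tile_ind_refl in Hmono; lia.
Qed.

End Height.

Theorem lemma6p40 (b1 b2 : pt) (T : pt -> tile) (g1 g2 g3 : nat) :
  full_rank b1 b2 ->
  periodic_tiling b1 b2 T ->
  has_type b1 b2 T g1 g2 g3 ->
  (0 < g1)%nat -> (0 < g2)%nat -> (0 < g3)%nat ->
  ~ infinite_path T.
Proof.
  intros Hrank [Hinv Htiling] [HU [HV HW]] Hg1 Hg2 Hg3.
  set (N := det b1 b2 * det b1 b2).
  assert (HN : 0 < N) by (unfold N, full_rank, det in *; nia).
  destruct (L1_invariant_det_periodic b1 b2 T (det b1 b2) Hinv) as [Hfst Hsnd].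
  destruct (coset_count_witness _ _ _ _ HU Hg1) as [[au bu] Hu].
  destruct (coset_count_witness _ _ _ _ HV Hg2) as [[av bv] Hv].
  destruct (coset_count_witness _ _ _ _ HW Hg3) as [[aw bw] Hw].
  apply (no_infinite_path_of_potential T (potential T N)).
  - apply (periodic2_bounded _ N HN);
      [apply potential_periodic_fst | apply potential_periodic_snd]; assumption.
  - intros x d Harrow; rewrite (potential_step T Htiling N x d Harrow).
    pose proof (weight_u_pos T Htiling N HN Hfst au bu Hu).
    pose proof (weight_v_pos T Htiling N HN Hsnd av bv Hv).
    pose proof (weight_w_pos T Htiling N HN Hfst Hsnd aw bw Hw).
    destruct d; cbn [weight]; lia.
Qed.
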